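(* Let $\Gamma$ be a finite dynamic game with ordinal preferences and perfect recall, let $u=(u_j)_{j\in I}$ be a profile of utility functions with $u_j\in\mathcal U_j$ for every $j$, and let $R\subseteq S$ be a restriction. Then $\mathbb M(R)[u]\subseteq\mathbb U(R)$.
   Context: A finite dynamic game with ordinal preferences and perfect recall $\Gamma$ consists of: a finite set of players $I$; a finite rooted tree of histories (finite sequences of action profiles, simultaneous moves allowed) with terminal histories $Z$; for each $i$ a partition $H_i$ of the non-terminal histories where $i$ is active (at least two actions) into information sets with identical available actions; perfect recall; complete transitive preferences $\succsim_i$ on $Z$ (asymmetric part $\succ_i$). Strategies of $i$ are equivalence classes of behaviorally equivalent standard strategies (action assignments to $H_i$, identified when they allow the same information sets and prescribe the same actions there); $S_i$ is the finite set of strategies, $S=\prod_jS_j$, $S_{-i}=\prod_{j\ne i}S_j$, $\zeta:S\to Z$ the outcome map. For $h\in H_i$, $S_i(h)$, $S_{-i}(h)$ are strategies of $i$, resp. profiles of others, reaching $h$; $H_i(s_i)=\{h\in H_i:s_i\in S_i(h)\}$. A restriction is a nonempty $R=\prod_jR_j\subseteq S$; $R_i(h)=R_i\cap S_i(h)$, $R_{-i}(h)=R_{-i}\cap S_{-i}(h)$, $R^i(h)=R_i(h)\times R_{-i}(h)$. For $P=P_i\times P_{-i}$ ($P_{-i}\subseteq S_{-i}$ not necessarily a product), $s_i\in P_i$ is weakly dominated relative to $P$ by $t_i\in P_i$ if $\zeta(t_i,s_{-i})\succsim_i\zeta(s_i,s_{-i})$ for all $s_{-i}\in P_{-i}$ with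 $\succ_i$ for some; B-dominated w.r.t. $P$ if for every nonempty $Q_{-i}\subseteq P_{-i}$ it is weakly dominated relative to $P_i\times Q_{-i}$ by some strategy in $P_i$. $s_i\in R_i$ is conditionally B-dominated w.r.t. $R$ if some $h\in H_i(s_i)$ has $R^i(h)\ne\emptyset$ and $s_i$ B-dominated w.r.t. $R^i(h)$. $\mathbb U_i(R)$ is the set of $s_i\in R_i$ not conditionally B-dominated w.r.t. $R$; $\mathbb U(R)=\prod_j\mathbb U_j(R)$. $\mathcal U_i$ is the set of $u_i:Z\to\mathbb R$ with $u_i(z)\ge u_i(z')\iff z\succsim_iz'$. Given $u_i$, $s_i\in P_i$ is strictly dominated relative to $P=P_i\times P_{-i}$ by a mixed strategy if there is a probability distribution $\sigma$ on $P_i$ with $\sum_{t_i\in P_i}\sigma(t_i)u_i(\zeta(t_i,s_{-i}))>u_i(\zeta(s_i,s_{-i}))$ for every $s_{-i}\in P_{-i}$. $\mathbb M_i(R)[u_i]$ is the set of $s_i\in R_i$ such that for every $h\in H_i(s_i)$ with $R^i(h)\ne\emptyset$, $s_i$ is not strictly dominated relative to $R^i(h)$ by a mixed strategy (given $u_i$); $\mathbb M(R)[u]=\prod_j\mathbb M_j(R)[u_j]$. *)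

From HB Require Import structures.
From mathcomp Require Import all_boot all_order all_algebra.
From mathcomp Require Import reals.
Set Implicit Arguments.
Unset Strict Implicit.
Unset Printing Implicit Defensive.
Import Order.TTheory GRing.Theory Num.Theory.

Record tree := Tree {
  player : finType;
  action : finType;
  hist : pred (seq {ffun player -> action});
  hist_nil : hist [::];
  hist_prefix : forall h a, hist (rcons h a) -> hist h;
  depth : nat;
  hist_bounded : forall h, hist h -> size h <= depth;
  (* simultaneous moves: the feasible profiles at a non-terminal history
     form the product of the players' individual feasible action sets *)
  hist_prod : forall h (a : {ffun player -> action}),
      hist h -> (exists b, hist (rcons h b)) ->
      (forall i, exists b, hist (rcons h b) /\ b i = a i) ->
      hist (rcons h a)
}.

Section TreeDefs.
Variable T : tree.
Definition prof := {ffun player T -> action T}.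

Definition avail (h : seq prof) (i : player T) : {set action T} :=
  [set x | [exists a : prof, @hist T (rcons h a) && (a i == x)]].

Definition active (i : player T) (h : seq prof) : bool := 1 < #|avail h i|.

Definition terminal (h : seq prof) : bool :=
  @hist T h && ~~ [exists a : prof, @hist T (rcons h a)].
End TreeDefs.

Fixpoint exp_aux (T : tree) (Inf : finType) (lab : player T -> seq (prof T) -> Inf)
    (i : player T) (pre h : seq (prof T)) : seq (Inf * action T) :=
  match h with
  | [::] => [::]
  | a :: h' => (if active i pre then [:: (lab i pre, a i)] else [::])
               ++ exp_aux lab i (rcons pre a) h'
  end.

Record game := Game {
  gtree :> tree;
  (* information sets of player i are the (nonempty) classes of active
     histories of i under the labelling lab i *)
  Inf : finType;
  lab : player gtree -> seq (prof gtree) -> Inf;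
  info_avail : forall i h h', @hist gtree h -> @hist gtree h' ->
      active i h -> active i h' -> lab i h = lab i h' -> avail h i = avail h' i;
  perfect_recall : forall i h h', @hist gtree h -> @hist gtree h' ->
      active i h -> active i h' -> lab i h = lab i h' ->
      exp_aux lab i [::] h = exp_aux lab i [::] h';
  pref : player gtree -> seq (prof gtree) -> seq (prof gtree) -> Prop;
  pref_complete : forall i z z', terminal z -> terminal z' -> pref i z z' \/ pref i z' z;
  pref_trans : forall i z1 z2 z3, terminal z1 -> terminal z2 -> terminal z3 ->
      pref i z1 z2 -> pref i z2 z3 -> pref i z1 z3
}.

Section GameDefs.
Variable g : game.
Local Notation player := (player g).
Local Notation action := (action g).
Local Notation prof := (prof g).
Local Notation hist := (@hist g).

Definition spref (i : player) (z z' : seq prof) : Prop := pref i z z' /\ ~ pref i z' z.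

Definition infoset (i : player) (x : Inf g) : Prop :=
  exists h, hist h /\ active i h /\ lab i h = x.

Fixpoint follows_aux (i : player) (c : Inf g -> option action) (pre h : seq prof) : Prop :=
  match h with
  | [::] => True
  | a :: h' => (active i pre -> c (lab i pre) = Some (a i)) /\ follows_aux i c (rcons pre a) h'
  end.
Definition follows i c h := follows_aux i c [::] h.

Definition std_strat := {ffun Inf g -> action}.
Definition feasible (i : player) (f : std_strat) : Prop :=
  forall h, hist h -> active i h -> f (lab i h) \in avail h i.
Definition allows (i : player) (f : std_strat) (x : Inf g) : Prop :=
  exists h, hist h /\ active i h /\ lab i h = x /\ follows i (fun y => Some (f y)) h.

(* strategies = behavioural-equivalence classes of standard strategies,
   represented canonically by the partial assignment defined exactly on the
   allowed information sets *)
Definition rstrat := {ffun Inf g -> option action}.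
Definition represents (i : player) (f : std_strat) (r : rstrat) : Prop :=
  feasible i f /\
  forall x, (allows i f x -> r x = Some (f x)) /\ (~ allows i f x -> r x = None).
Definition is_strat (i : player) (r : rstrat) : Prop := exists f, represents i f r.

Definition sprof := {ffun player -> rstrat}.
Definition upd (p : sprof) (i : player) (t : rstrat) : sprof :=
  [ffun j => if j == i then t else p j].

Definition step (p : sprof) (h : seq prof) : seq prof :=
  if [pick a : prof | hist (rcons h a) &&
        [forall j, active j h ==> (p j (lab j h) == Some (a j))]] is Some a
  then rcons h a else h.
Definition zeta (p : sprof) : seq prof := iter (depth g) (step p) [::].

Definition reaches (i : player) (r : rstrat) (x : Inf g) : Prop :=
  is_strat i r /\ exists h, hist h /\ active i h /\ lab i h = x /\ follows i r h.
(* S_{-i}(h): profiles of the others reaching x (the i-th component of p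
   is ignored) *)
Definition reaches_others (i : player) (p : sprof) (x : Inf g) : Prop :=
  (forall j, j != i -> is_strat j (p j)) /\
  exists h, hist h /\ active i h /\ lab i h = x /\ forall j, j != i -> follows j (p j) h.

Definition restriction (R : player -> {set rstrat}) : Prop :=
  (forall j, R j != set0) /\ (forall j r, r \in R j -> is_strat j r).

Definition Ri_at (R : player -> {set rstrat}) i x (t : rstrat) : Prop :=
  t \in R i /\ reaches i t x.
Definition Rmi_at (R : player -> {set rstrat}) i x (p : sprof) : Prop :=
  (forall j, j != i -> p j \in R j) /\ reaches_others i p x.
Definition Rix_nonempty R i x : Prop :=
  (exists t, Ri_at R i x t) /\ (exists p, Rmi_at R i x p).

Definition wdominated (i : player) (Pi : rstrat -> Prop) (Pmi : sprof -> Prop)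
    (s t : rstrat) : Prop :=
  Pi s /\ Pi t /\
  (forall p, Pmi p -> pref i (zeta (upd p i t)) (zeta (upd p i s))) /\
  (exists p, Pmi p /\ spref i (zeta (upd p i t)) (zeta (upd p i s))).

Definition Bdominated (i : player) (Pi : rstrat -> Prop) (Pmi : sprof -> Prop)
    (s : rstrat) : Prop :=
  Pi s /\
  forall Q : sprof -> Prop, (exists p, Q p) -> (forall p, Q p -> Pmi p) ->
    exists t, Pi t /\ wdominated i Pi Q s t.

Definition cond_Bdominated (R : player -> {set rstrat}) i (s : rstrat) : Prop :=
  s \in R i /\
  exists x, infoset i x /\ reaches i s x /\ Rix_nonempty R i x /\
    Bdominated i (Ri_at R i x) (Rmi_at R i x) s.
Definition UU (R : player -> {set rstrat}) i (s : rstrat) : Prop :=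
  s \in R i /\ ~ cond_Bdominated R i s.

Definition represents_pref {Rl : realType} (i : player) (u : seq prof -> Rl) : Prop :=
  forall z z', terminal z -> terminal z' -> ((u z' <= u z)%R <-> pref i z z').

Definition mixed_sdominated {Rl : realType} (i : player) (u : seq prof -> Rl)
    (Pi : rstrat -> Prop) (Pmi : sprof -> Prop) (s : rstrat) : Prop :=
  exists sigma : rstrat -> Rl,
    (forall t, 0 <= sigma t)%R /\ (forall t, sigma t != 0%R -> Pi t) /\
    (\sum_(t : rstrat) sigma t = 1)%R /\
    forall p, Pmi p ->
      (\sum_(t : rstrat) sigma t * u (zeta (upd p i t)) > u (zeta (upd p i s)))%R.

Definition MM {Rl : realType} (R : player -> {set rstrat}) i (u : seq prof -> Rl)
    (s : rstrat) : Prop :=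
  s \in R i /\
  forall x, infoset i x -> reaches i s x -> Rix_nonempty R i x ->
    ~ mixed_sdominated i u (Ri_at R i x) (Rmi_at R i x) s.

End GameDefs.

From mathcomp Require Import all_boot all_order all_algebra.
From mathcomp Require Import reals.
From mathcomp Require Import lra boolp.
Set Implicit Arguments.
Unset Strict Implicit.
Unset Printing Implicit Defensive.
Import Order.TTheory GRing.Theory Num.Theory.
Local Open Scope ring_scope.

(* B-dominance of s says that against every nonempty set Q of opponent
   profiles some strategy t is weakly better than s on Q and strictly better
   somewhere in Q.  On the strictly smaller set Q' of profiles where t only
   ties s, induction provides a mixture tau strictly better than s; the
   mixture (1 - e) t + e tau, for e small enough not to destroy the strict
   gains of t, is then strictly better than s on all of Q. *)

Section MixedStrategies.
Variables (R : realFieldType) (S P : finType) (U : P -> S -> R).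

Definition expected (sigma : S -> R) (p : P) : R := \sum_t sigma t * U p t.

Definition mixture_in (A : S -> Prop) (sigma : S -> R) : Prop :=
  (forall t, 0 <= sigma t) /\ (forall t, sigma t != 0 -> A t) /\ \sum_t sigma t = 1.

Definition pure (t : S) : S -> R := fun t' => (t' == t)%:R.

Definition mix (e : R) (sigma tau : S -> R) : S -> R :=
  fun t => (1 - e) * sigma t + e * tau t.

Lemma sum_pure t (F : S -> R) : \sum_t' pure t t' * F t' = F t.
Proof.
rewrite (bigD1 t) //= /pure eqxx mul1r big1 ?addr0 // => t' /negbTE t't.
by rewrite t't mul0r.
Qed.

Lemma expected_pure t p : expected (pure t) p = U p t.
Proof. exact: sum_pure. Qed.

Lemma mixture_pure A t : A t -> mixture_in A (pure t).
Proof.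
move=> At; split; first by move=> t'; rewrite ler0n.
split; first by move=> t'; rewrite /pure; have [->|] := eqVneq t' t; rewrite ?eqxx.
by rewrite -[RHS](sum_pure t (fun=> 1)); apply: eq_bigr => t' _; rewrite mulr1.
Qed.

Lemma sum_mix e sigma tau (F : S -> R) :
  \sum_t mix e sigma tau t * F t =
  (1 - e) * \sum_t sigma t * F t + e * \sum_t tau t * F t.
Proof.
rewrite !mulr_sumr -big_split /=; apply: eq_bigr => t _.
by rewrite /mix mulrDl !mulrA.
Qed.

Lemma expected_mix e sigma tau p :
  expected (mix e sigma tau) p = (1 - e) * expected sigma p + e * expected tau p.
Proof. exact: sum_mix. Qed.

Lemma mixture_mix A e sigma tau : 0 <= e <= 1 ->
  mixture_in A sigma -> mixture_in A tau -> mixture_in A (mix e sigma tau).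
Proof.
case/andP=> e0 e1 [sigma0 [Asigma sigma1]] [tau0 [Atau tau1]].
have e'0 : 0 <= 1 - e by rewrite subr_ge0.
split; first by move=> t; rewrite addr_ge0 // mulr_ge0.
split.
  move=> t; have [tau_t0|/Atau //] := eqVneq (tau t) 0.
  by rewrite /mix tau_t0 mulr0 addr0 mulf_eq0 negb_or => /andP[_ /Asigma].
by rewrite /mix big_split /= -!mulr_sumr sigma1 tau1 !mulr1 subrK.
Qed.

Lemma mix_gt_tie (a c e : R) : 0 < e -> a < c -> a < (1 - e) * a + e * c.
Proof.
move=> e0 ac; have : 0 < e * (c - a) by rewrite mulr_gt0 // subr_gt0.
by rewrite mulrBr mulrBl mul1r; lra.
Qed.

Lemma mix_gt_small (a b c e : R) :
  0 < e -> e * (`|b - c| + 1) <= b - a -> a < (1 - e) * b + e * c.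
Proof.
move=> e0 small.
have : e * (b - c) <= e * `|b - c| by apply: ler_wpM2l; [exact: ltW | exact: ler_norm].
by move: small; rewrite mulrDr mulr1 mulrBr mulrBl mul1r; lra.
Qed.

Variables (A : S -> Prop) (s : S) (Q0 : {set P}).
Hypothesis Bdom : forall Q : {set P}, Q \subset Q0 -> Q != set0 ->
  exists t, [/\ A t, forall p, p \in Q -> U p s <= U p t
              & exists2 p, p \in Q & U p s < U p t].

Lemma mixed_strict_dominance (Q : {set P}) : Q \subset Q0 -> Q != set0 ->
  exists2 sigma, mixture_in A sigma & forall p, p \in Q -> U p s < expected sigma p.
Proof.
have [n] := ubnP #|Q|; elim: n Q => // n IH Q /ltnSE leQn sQ Q_n0.
have [t [At weak [p0 Qp0 strict0]]] := Bdom sQ Q_n0.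
pose Q' := [set p in Q | U p t == U p s].
have sQ'Q : Q' \subset Q by apply/subsetP => p; rewrite inE => /andP[].
have [Q'0|Q'_n0] := eqVneq Q' set0.
  exists (pure t); first exact: mixture_pure.
  move=> p Qp; rewrite expected_pure lt_def weak // andbT.
  apply/eqP => tie; have : p \in Q' by rewrite inE Qp tie eqxx.
  by rewrite Q'0 inE.
have ltQ'n : (#|Q'| < n)%N.
  have : Q' \proper Q by apply/properP; split=> //; exists p0; rewrite ?inE ?Qp0 ?gt_eqF.
  by move/proper_card/leq_trans; apply.
have [tau Atau strict'] := IH Q' ltQ'n (subset_trans sQ'Q sQ) Q'_n0.
pose f p := (U p t - U p s) / (`|U p t - expected tau p| + 1).
pose e := \big[Order.min/1]_(p | (p \in Q) && (U p t != U p s)) f p.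
have norm1_gt0 p : 0 < `|U p t - expected tau p| + 1 by rewrite ltr_wpDl.
have e_gt0 : 0 < e.
  apply/bigmin_gtP; split=> // p /andP[Qp ne]; rewrite divr_gt0 // subr_gt0.
  by rewrite lt_def ne weak.
exists (mix e (pure t) tau).
  by apply: mixture_mix => //; [rewrite ltW ?bigmin_le_id | exact: mixture_pure].
move=> p Qp; rewrite expected_mix expected_pure.
have [tie|ne] := eqVneq (U p t) (U p s).
  by rewrite tie mix_gt_tie // strict' // inE Qp tie eqxx.
have e_le_f : e <= f p by apply: bigmin_le_cond; rewrite Qp ne.
by apply: mix_gt_small => //; rewrite -ler_pdivlMr.
Qed.

End MixedStrategies.

Section Outcomes.
Variable g : game.
Implicit Types (p : sprof g) (h : seq (prof g)).

Lemma follows_rcons (i : player g) c pre h a :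
  follows_aux i c pre (rcons h a) <->
  follows_aux i c pre h /\ (active i (pre ++ h) -> c (lab i (pre ++ h)) = Some (a i)).
Proof.
elim: h pre => [|b h IH] pre /=; first by rewrite cats0; tauto.
by rewrite IH cat_rcons; tauto.
Qed.

Lemma follows_represents (i : player g) f (r : rstrat g) pre h :
  represents i f r -> follows_aux i r pre h -> follows_aux i (fun y => Some (f y)) pre h.
Proof.
move=> [_ rf]; elim: h pre => [|a h IH] pre //= [now later]; split; last exact: IH.
move=> act; have := now act.
by have [/(rf _).1|/(rf _).2] := pselect (allows i f (lab i pre)) => ->.
Qed.

(* The move prescribed at h is feasible because feasible moves form a
   product ([hist_prod]). *)
Lemma step_exists p h : (forall j, is_strat j (p j)) ->
  @hist g h -> (forall j, follows j (p j) h) -> (exists b, @hist g (rcons h b)) ->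
  exists a, @hist g (rcons h a) &&
            [forall j, active j h ==> (p j (lab j h) == Some (a j))].
Proof.
move=> strats hh hf [b hb].
have prescribed j : active j h -> exists f, represents j f (p j) /\
    p j (lab j h) = Some (f (lab j h)).
  move=> act; have [f rf] := strats j; exists f; split => //.
  by apply: (rf.2 _).1; exists h; do 3!split => //; exact: follows_represents rf (hf j).
pose a := [ffun j => if active j h then odflt (b j) (p j (lab j h)) else b j].
exists a; apply/andP; split.
  apply: hist_prod => //; first by exists b.
  move=> j; rewrite ffunE; case act: (active j h); last by exists b.
  have [f [rf ->]] := prescribed j act.
  have := rf.1 h hh act; rewrite inE => /existsP [b' /andP [hb' /eqP eb']].
  by exists b'.
apply/forallP => j; apply/implyP => act; rewrite ffunE act.
by have [f [_ ->]] := prescribed j act.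
Qed.

(* Invariant of the k-th iterate of [step]; as histories have length at most
   [depth g], the iterate defining [zeta] must be terminal. *)
Definition partial_play p k h :=
  @hist g h /\ (forall j, follows j (p j) h) /\ (terminal h \/ size h = k).

Lemma partial_play_step p k h : (forall j, is_strat j (p j)) ->
  partial_play p k h -> partial_play p k.+1 (step p h).
Proof.
move=> strats [hh [hf hk]]; rewrite /step; case: pickP => [a /andP [ha /forallP pa]|none].
  split=> //; split.
    move=> j; rewrite /follows follows_rcons; split=> [|act]; first exact: hf.
    by apply/eqP; move: (pa j); rewrite act.
  case: hk => [/andP [_ /existsP []]|hk]; first by exists a.
  by right; rewrite size_rcons hk.
do 2!split => //; left; rewrite /terminal hh /=; apply/existsP => -[b hb].
have [a /andP [ha pa]] := step_exists strats hh hf (ex_intro _ b hb).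
by move: (none a); rewrite ha pa.
Qed.

Lemma zeta_terminal p : (forall j, is_strat j (p j)) -> terminal (zeta p).
Proof.
move=> strats; have play k : partial_play p k (iter k (step p) [::]).
  elim: k => [|k IH]; first by split; [exact: hist_nil | split=> //; right].
  exact: partial_play_step.
have [hh [_ [//|hdepth]]] := play (depth g).
rewrite /terminal hh /=; apply/existsP => -[a ha].
by have := hist_bounded ha; rewrite size_rcons /zeta hdepth ltnn.
Qed.

Lemma restriction_zeta_terminal R i x t p : restriction R ->
  Ri_at R i x t -> Rmi_at R i x p -> terminal (zeta (upd p i t)).
Proof.
move=> [_ inR] [Rt _] [Rp _]; apply: zeta_terminal => j; rewrite ffunE.
by case: eqP => [->|/eqP ji]; [exact: inR Rt | exact: inR (Rp j ji)].
Qed.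

End Outcomes.

Section Utilities.
Variables (Rl : realType) (g : game) (i : player g) (u : seq (prof g) -> Rl).
Hypothesis u_pref : represents_pref i u.

Lemma represents_pref_lt z z' : terminal z -> terminal z' ->
  spref i z' z -> u z < u z'.
Proof.
move=> tz tz' [_ nz]; rewrite ltNge; apply/negP => /(u_pref tz tz').
exact: nz.
Qed.

Lemma Bdominated_mixed_sdominated (Pi : rstrat g -> Prop) (Pmi : sprof g -> Prop) s :
  (forall t p, Pi t -> Pmi p -> terminal (zeta (upd p i t))) ->
  Bdominated i Pi Pmi s -> mixed_sdominated i u Pi Pmi s.
Proof.
move=> term [Pis Bdom]; pose Q0 := [set p | `[< Pmi p >]].
have Q0P p : reflect (Pmi p) (p \in Q0) by rewrite inE; exact: asboolP.
pose U p t := u (zeta (upd p i t)).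
have Bdom_on_sets (Q : {set sprof g}) : Q \subset Q0 -> Q != set0 ->
    exists t, [/\ Pi t, forall p, p \in Q -> U p s <= U p t
                & exists2 p, p \in Q & U p s < U p t].
  move=> /subsetP sQ /set0Pn Q_n0.
  have PmiQ p : p \in Q -> Pmi p by move/sQ/Q0P.
  have [t [Pit [_ [_ [weak [p [Qp strict]]]]]]] := Bdom _ Q_n0 PmiQ.
  have outQ t' p' : Pi t' -> p' \in Q -> terminal (zeta (upd p' i t')).
    by move=> Pit' /PmiQ; exact: term.
  exists t; split=> //.
    move=> p' Qp'; apply/(u_pref (outQ _ _ Pit Qp') (outQ _ _ Pis Qp')).
    exact: weak.
  by exists p => //; apply: represents_pref_lt strict; exact: outQ.
have [Q0_0|Q0_n0] := eqVneq Q0 set0.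
  have [pure0 [pureP pure1]] := mixture_pure Rl Pis.
  exists (pure Rl s); do 3!split=> //.
  by move=> p /Q0P; rewrite Q0_0 inE.
have [sigma [sigma0 [sigmaP sigma1]] strict] :=
  mixed_strict_dominance (U := U) Bdom_on_sets (subxx Q0) Q0_n0.
by exists sigma; do 3!split=> //; move=> p /Q0P /strict.
Qed.

End Utilities.

Theorem proposition4 (Rl : realType) (g : game)
    (u : player g -> seq (prof g) -> Rl)
    (hu : forall j, represents_pref j (u j))
    (R : player g -> {set rstrat g})
    (hR : restriction R) :
  forall s : sprof g,
    (forall j, MM R j (u j) (s j)) -> (forall j, UU R j (s j)).
Proof.
move=> s Ms j; split; first exact: (Ms j).1.
move=> [_ [x [infx [reach [nonempty Bdom]]]]].
apply: (Ms j).2 infx reach nonempty _.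
apply: Bdominated_mixed_sdominated Bdom; first exact: hu.
by move=> t p; exact: restriction_zeta_terminal.
Qed.
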